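(* Let $0\le k,k',\ell,\ell'<p+1$. Then $\varphi_{k,\ell}$ is equivalent to $\varphi_{k',\ell'}$ (i.e. conjugate by an element of $\mathrm{GL}_2(\overline{\mathbb{F}}_p)$) if and only if $\{k,\ell\}=\{k',\ell'\}$.
   Context: $p$ odd prime; $\mathcal{G}_F=\mathrm{Gal}(\overline{\mathbb{Q}}_p/F)$, $\mathbb{Q}_{p^2}$ the unramified quadratic extension; $\mathrm{Fr}_p\in\mathcal{G}_{\mathbb{Q}_p}$ a fixed lift of geometric Frobenius (image of $p^{-1}$ under reciprocity normalized with uniformizers $\mapsto$ geometric Frobenius). $\omega_2$: the character of $\mathcal{G}_{\mathbb{Q}_{p^2}}$ given on inertia by $h\mapsto$ reduction of $h(\sqrt[p^2-1]{p})/\sqrt[p^2-1]{p}$, with $\omega_2(\mathrm{Fr}_p^2)=1$; $\mu_{2,-1}$ the unramified character with $\mathrm{Fr}_p^2\mapsto-1$. ${}^LG=\mathrm{GL}_2(\overline{\mathbb{F}}_p)\rtimes\mathcal{G}_{\mathbb{Q}_p}$, $\mathcal{G}_{\mathbb{Q}_{p^2}}$ acting trivially and $\mathrm{Fr}_pg\mathrm{Fr}_p^{-1}=\Phi_2(g^\top)^{-1}\Phi_2^{-1}$, $\Phi_2=\begin{pmatrix}0&1\\-1&0\end{pmatrix}$. $\varphi_{k,\ell}:\mathcal{G}_{\mathbb{Q}_p}\to{}^LG$ is the homomorphism with $\varphi_{k,\ell}(\mathrm{Fr}_p)=\begin{pmatrix}0&-1\\1&0\end{pmatrix}\mathrm{Fr}_p$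 and $\varphi_{k,\ell}(h)=\mathrm{diag}\big(\mu_{2,-1}\omega_2^{(1-p)k}(h),\mu_{2,-1}\omega_2^{(1-p)\ell}(h)\big)h$ for $h\in\mathcal{G}_{\mathbb{Q}_{p^2}}$. *)

From HB Require Import structures.
From mathcomp Require Import all_boot all_order all_algebra.
Set Implicit Arguments. Unset Strict Implicit. Unset Printing Implicit Defensive.
Import GRing.Theory.
Local Open Scope ring_scope.

(* F plays the role of \bar{F}_p : an algebraically closed field of char p. *)

Definition diag2 (F : fieldType) (a b : F) : 'M[F]_2 :=
  \matrix_(i < 2, j < 2) (if i == j then (if (i : nat) == 0%N then a else b) else 0).

Definition Phi2 (F : fieldType) : 'M[F]_2 :=
  \matrix_(i < 2, j < 2)
    (if ((i : nat) == 0%N) && ((j : nat) == 1%N) then 1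
     else if ((i : nat) == 1%N) && ((j : nat) == 0%N) then -1 else 0).

(* The matrix part [[0,-1],[1,0]] of varphi_{k,l}(Fr_p) *)
Definition Afr (F : fieldType) : 'M[F]_2 :=
  \matrix_(i < 2, j < 2)
    (if ((i : nat) == 0%N) && ((j : nat) == 1%N) then -1
     else if ((i : nat) == 1%N) && ((j : nat) == 0%N) then 1 else 0).

(* Action of an element sigma of G_{Q_p} on GL_2 in the L-group: trivial if
   sigma \in G_{Q_{p^2}} (fr = false), and g |-> Phi2 (g^T)^{-1} Phi2^{-1}
   if sigma \notin G_{Q_{p^2}} (fr = true).  *)
Definition gal_act (F : fieldType) (fr : bool) (g : 'M[F]_2) : 'M[F]_2 :=
  if fr then Phi2 F *m invmx (g^T) *m invmx (Phi2 F) else g.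

(* GL_2-component of varphi_{k,l}(sigma), where sigma is described by
   - eps = mu_{2,-1}(h) in {1,-1},
   - z   = omega_2^{1-p}(h), a (p+1)-th root of unity,
   - fr  = whether sigma = h Fr_p (true) or sigma = h (false),
   for the unique h in G_{Q_{p^2}} with sigma in {h, h Fr_p}.
   Indeed varphi(h Fr_p) = diag(..) h (A Fr_p) = (diag(..) A) Fr_p since h acts
   trivially on GL_2. *)
Definition phi_mat (F : fieldType) (k l : nat) (eps z : F) (fr : bool)
  : 'M[F]_2 :=
  let D := diag2 (eps * z ^+ k) (eps * z ^+ l) in
  if fr then D *m Afr F else D.

(* varphi_{k,l} and varphi_{k',l'} are GL_2(\bar F_p)-conjugate:
   exists g in GL_2 such that for all sigma,
   g varphi_{k,l}(sigma) g^{-1} = varphi_{k',l'}(sigma) in ^L G, i.e.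
   g * a(sigma) * sigma(g^{-1}) = a'(sigma) on GL_2-components.
   sigma ranges over all of G_{Q_p}: the pair (mu_{2,-1}(h), omega_2^{1-p}(h))
   ranges over all of {+-1} x mu_{p+1}(\bar F_p) as h ranges over G_{Q_{p^2}}. *)
Definition phi_equiv (F : fieldType) (p k l k' l' : nat) : Prop :=
  exists g : 'M[F]_2, g \in unitmx /\
    forall (eps z : F) (fr : bool),
      (eps = 1 \/ eps = -1) -> z ^+ p.+1 = 1 ->
      g *m phi_mat k l eps z fr *m gal_act fr (invmx g) = phi_mat k' l' eps z fr.

From HB Require Import structures.
From mathcomp Require Import all_boot all_order all_algebra.
From mathcomp Require Import all_solvable all_field zify.

(* Take h with mu_{2,-1}(h) = 1 and z := omega_2^{1-p}(h) a primitive (p+1)-th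
   root of unity (one exists since p + 1 is prime to p).  An equivalence g then
   conjugates diag(z^k, z^l) into diag(z^k', z^l'); since each row of the
   invertible g has a nonzero entry, every entry of the second diagonal occurs
   in the first (and conversely, using g^-1), and z^a determines a < p + 1.
   Conversely the identity and the antidiagonal swap matrix realise the
   equivalences, the Frobenius twist cancelling because Afr Phi2 = 1. *)

Set Implicit Arguments. Unset Strict Implicit. Unset Printing Implicit Defensive.
Import GRing.Theory.
Local Open Scope ring_scope.

Lemma unitmx_row_neq0 (R : comUnitRingType) n (g : 'M[R]_n) (i : 'I_n) :
  g \in unitmx -> exists j, g i j != 0.
Proof.
move=> gu; apply/existsP; apply: contraLR isT => /existsPn row0.
have rowg0 : row i g = 0 by apply/rowP => j; rewrite !mxE; apply/eqP/negbNE.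
have := row_mul i g (invmx g); rewrite mulmxV // rowg0 mul0mx row1.
by move/matrixP/(_ 0 i); rewrite !mxE !eqxx /= => /eqP; rewrite oner_eq0.
Qed.

Lemma conj_diag_mx_sub (R : idomainType) n (g : 'M[R]_n) (d d' : 'rV[R]_n) :
    g \in unitmx -> g *m diag_mx d = diag_mx d' *m g ->
  forall i, exists j, d' 0 i = d 0 j.
Proof.
move=> gu E i; have [j gij] := unitmx_row_neq0 i gu; exists j.
move/matrixP/(_ i j): E; rewrite mul_mx_diag mul_diag_mx !mxE [RHS]mulrC.
by move/(mulfI gij)/esym.
Qed.

Section DiagonalPowers.

Variables (R : idomainType) (m n : nat) (z : R).
Hypothesis prim_z : m.-primitive_root z.

Definition diag_expr (s : seq nat) : 'M[R]_n := diag_mx (\row_(i < n) z ^+ nth 0%N s i).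

Lemma diag_expr_conj_sub (g : 'M[R]_n) (s s' : seq nat) :
    size s = n -> size s' = n -> all (gtn m) s -> all (gtn m) s' ->
    g \in unitmx -> g *m diag_expr s = diag_expr s' *m g ->
  {subset s' <= s}.
Proof.
move=> sz_s sz_s' lt_s lt_s' gu E x x_s'.
have x_idx : (index x s' < n)%N by rewrite -sz_s' index_mem.
have [j] := conj_diag_mx_sub gu E (Ordinal x_idx); rewrite !mxE /= nth_index //.
have s_j : nth 0%N s j \in s by rewrite mem_nth // sz_s.
have [lt_x lt_j] := (allP lt_s' x x_s', allP lt_s _ s_j).
by move/eqP; rewrite (eq_prim_root_expr prim_z) !modn_small // => /eqP->.
Qed.

Lemma diag_expr_conj_eq_mem (g : 'M[R]_n) (s s' : seq nat) :
    size s = n -> size s' = n -> all (gtn m) s -> all (gtn m) s' ->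
    g \in unitmx -> g *m diag_expr s = diag_expr s' *m g ->
  s =i s'.
Proof.
move=> sz_s sz_s' lt_s lt_s' gu E.
have E' : invmx g *m diag_expr s' = diag_expr s *m invmx g.
  by rewrite -[LHS](mulmxK gu) -[invmx g *m _ *m g]mulmxA -E mulmxA mulVmx // mul1mx.
move=> x; apply/idP/idP; [apply: (diag_expr_conj_sub _ _ _ _ _ E') |
  apply: (diag_expr_conj_sub _ _ _ _ gu E)] => //.
by rewrite unitmx_inv.
Qed.

End DiagonalPowers.

(* 'X^n - 1 is separable when n is invertible, so its n roots are distinct. *)
Lemma prim_root_exists (F : closedFieldType) (n : nat) :
  (0 < n)%N -> n%:R != 0 :> F -> exists z : F, n.-primitive_root z.
Proof.
move=> n_gt0 n_neq0; pose P : {poly F} := 'X^n - 1.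
have [r Pr] := closed_field_poly_normal P.
rewrite (monicP (monic_Xn_sub_1 F n_gt0)) scale1r in Pr.
have sepP : separable_poly P.
  rewrite unlock; apply/Bezout_coprimepP; exists (-1, (n%:R)^-1 *: 'X) => /=.
  rewrite /P derivB derivXn derivC subr0 -scalerAl mulrnAr -mulrnAl mulrnAl.
  rewrite -exprS prednK // -scaler_nat scalerA mulVf // scale1r mulN1r opprB.
  by rewrite subrK eqpxx.
have r_uniq : uniq r by rewrite -separable_prod_XsubC -Pr.
have r_size : size r = n.
  have : size P = n.+1 := size_Xn_sub_1 F n_gt0.
  by rewrite Pr size_prod_XsubC; case.
have r_unity : all n.-unity_root r.
  apply/allP => x xr; have : root P x by rewrite Pr root_prod_XsubC.
  by rewrite /root /P !hornerE subr_eq0 unity_rootE.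
have /hasP[z _ z_prim] := has_prim_root n_gt0 r_unity r_uniq (eq_leq (esym r_size)).
by exists z.
Qed.

Ltac mx2_entries :=
  apply/matrixP; case=> [[|[|?]] ?] //; case=> [[|[|?]] ?] //;
  rewrite !(mxE, big_ord_recl, big_ord0) /=;
  rewrite ?(mul0r, mulr0, mul1r, mulr1, add0r, addr0, mulN1r, mulrN1, opprK).

Definition swap2 (F : fieldType) : 'M[F]_2 :=
  \matrix_(i < 2, j < 2) (if i == j then 0 else 1).

Section TwoByTwo.

Variable F : fieldType.

Lemma diag2_expr (z : F) k l : diag2 (z ^+ k) (z ^+ l) = diag_expr 2 z [:: k; l].
Proof. by mx2_entries. Qed.

Lemma Phi2_Afr : Phi2 F *m Afr F = 1%:M.
Proof. by mx2_entries. Qed.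

Lemma Afr_Phi2 : Afr F *m Phi2 F = 1%:M.
Proof. by mx2_entries. Qed.

Lemma swap2_swap2 : swap2 F *m swap2 F = 1%:M.
Proof. by mx2_entries. Qed.

Lemma tr_swap2 : (swap2 F)^T = swap2 F.
Proof. by mx2_entries. Qed.

Lemma swap2_diag2 (a b : F) : swap2 F *m diag2 a b *m swap2 F = diag2 b a.
Proof. by mx2_entries. Qed.

Lemma invmx_swap2 : invmx (swap2 F) = swap2 F.
Proof.
have swap2_unit := proj1 (mulmx1_unit swap2_swap2).
by rewrite -[RHS](mulKmx swap2_unit) swap2_swap2 mulmx1.
Qed.

Lemma gal_act_invmx fr (g : 'M[F]_2) :
  gal_act fr (invmx g) = if fr then Phi2 F *m g^T *m Afr F else invmx g.
Proof.
case: fr => //=; rewrite trmx_inv invmxK.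
have Phi2_unit := proj1 (mulmx1_unit Phi2_Afr).
by rewrite -[Afr F](mulKmx Phi2_unit) Phi2_Afr mulmx1.
Qed.

Lemma phi_equiv_refl p k l : phi_equiv F p k l k l.
Proof.
exists 1; split=> [|eps z fr _ _]; first exact: unitmx1.
rewrite gal_act_invmx mul1mx; case: fr.
  by rewrite trmx1 mulmx1 Phi2_Afr mulmx1.
by rewrite invmx1 mulmx1.
Qed.

Lemma phi_equiv_swap p k l : phi_equiv F p k l l k.
Proof.
have swap2_unit := proj1 (mulmx1_unit swap2_swap2).
exists (swap2 F); split=> // eps z fr _ _.
rewrite gal_act_invmx /phi_mat; case: fr.
  rewrite tr_swap2 !mulmxA -[_ *m Afr F *m Phi2 F]mulmxA Afr_Phi2 mulmx1.
  by rewrite swap2_diag2.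
by rewrite invmx_swap2 swap2_diag2.
Qed.

End TwoByTwo.

Lemma eq_mem_pair (k l k' l' : nat) : [:: k; l] =i [:: k'; l'] ->
  (k' = k /\ l' = l) \/ (k' = l /\ l' = k).
Proof.
move=> kl_eq; move: (kl_eq k) (kl_eq l) (kl_eq k') (kl_eq l').
by rewrite !inE !eqxx ?orbT /=; lia.
Qed.

Theorem lemma6p18 (p : nat) (F : closedFieldType)
    (hp : prime p) (hodd : odd p) (hchar : p \in [pchar F])
    (k l k' l' : nat)
    (hk : (k < p.+1)%N) (hl : (l < p.+1)%N)
    (hk' : (k' < p.+1)%N) (hl' : (l' < p.+1)%N) :
  phi_equiv F p k l k' l' <-> [:: k; l] =i [:: k'; l'].
Proof.
split=> [[g [gu conj_g]] | /eq_mem_pair[[-> ->]|[-> ->]]].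
- have p1_neq0 : (p.+1)%:R != 0 :> F.
    by rewrite -addn1 natrD (pcharf0 hchar) add0r oner_eq0.
  have [z z_prim] := prim_root_exists (ltn0Sn p) p1_neq0.
  have := conj_g 1 z false (or_introl erefl) (prim_expr_order z_prim).
  rewrite /phi_mat /gal_act !mul1r !diag2_expr => E.
  apply: (diag_expr_conj_eq_mem z_prim _ _ _ _ gu) => //=; rewrite ?hk ?hl ?hk' ?hl' //.
  by rewrite -E mulmxKV.
- exact: phi_equiv_refl.
- exact: phi_equiv_swap.
Qed.
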